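(* Let $\beta\in(0,1/2)$, $N=2^n$, $\delta_N=2^{-N^\beta}$. Let $(U,V,X,Z)$ be random variables with $U,V\in\{0,1\}$ and $X,Z$ taking values in finite alphabets $\mathcal X,\mathcal Z$, and let $P=P_{U^NV^NX^NZ^N}$ be the distribution of $N$ i.i.d. copies of $(U,V,X,Z)$. Put $T^N=V^NG_N$ and $$\mathcal H_{V|U,Z}=\{i\in[N]:\ Z(T_i\mid T^{i-1},U^N,Z^N)\ge 1-\delta_N\},$$ computed under $P$. Let $Q$ be any distribution on $\{0,1\}^N\times\{0,1\}^N\times\mathcal X^N\times\mathcal Z^N$ of $(U^N,V^N,X^N,Z^N)$ with $\|P-Q\|_1\le 2N2^{-N^\beta}$, and under $Q$ set $T^N=V^NG_N$. Let $\mathcal I\subseteq\mathcal H_{V|U,Z}$ and $\mathcal A\subseteq\mathcal I$, and write $T[\mathcal S]=(T_i)_{i\in\mathcal S}$. Then, with mutual information computed under $Q$, $$I\big(T[\mathcal I\setminus\mathcal A];\,T[\mathcal A],U^N,Z^N\big)=O\big(N^3 2^{-N^\beta}\big),$$ with implied constant depending only on $|\mathcal Z|$ (for all sufficiently large $N$).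
   Context: $G_N=B_NF^{\otimes n}$ is Arıkan's polarizing matrix over $\mathbb F_2$: $F=\begin{pmatrix}1&0\\1&1\end{pmatrix}$, $\otimes$ is the Kronecker product and $B_N$ is the bit-reversal permutation matrix. For a binary random variable $A$ and a discrete random variable $B$, $Z(A\mid B)=2\sum_b P_B(b)\sqrt{P_{A|B}(0|b)P_{A|B}(1|b)}$. $T^{i-1}=(T_1,\dots,T_{i-1})$, $[N]=\{1,\dots,N\}$, $\|\cdot\|_1$ is the $\ell_1$ distance between distributions, logarithms are base 2. *)

From Stdlib Require Import Reals.
From mathcomp Require Import all_boot.
Local Open Scope R_scope.

Set Implicit Arguments.
Unset Strict Implicit.
Unset Printing Implicit Defensive.

Definition is_dist (W : finType) (p : W -> R) : Prop :=
  (forall w, (0 <= p w)) /\ \big[Rplus/R0]_(w : W) p w = R1.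

Definition prob (W : finType) (p : W -> R) (E : pred W) : R :=
  \big[Rplus/R0]_(w : W | E w) p w.

Definition img (W : finType) (B : eqType) (f : W -> B) : seq B :=
  undup [seq f w | w <- enum W].

Definition log2 (x : R) : R := (ln x / ln 2).

(* Bhattacharyya parameter
   Z(A|B) = 2 sum_b P_B(b) sqrt(P_{A|B}(0|b) P_{A|B}(1|b)),  0 <-> false. *)
Definition Bhatt (W : finType) (p : W -> R) (B : eqType)
    (A : W -> bool) (Bv : W -> B) : R :=
  (2 * \big[Rplus/R0]_(b <- img Bv)
        (let pb := prob p (fun w => Bv w == b) in
         pb * sqrt ((prob p (fun w => (A w == false) && (Bv w == b)) / pb)
                  * (prob p (fun w => (A w == true) && (Bv w == b)) / pb)))).

(* mutual information (base-2 logs, 0 log 0 = 0) *)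
Definition MI (W : finType) (p : W -> R) (A B : eqType)
    (Av : W -> A) (Bv : W -> B) : R :=
  \big[Rplus/R0]_(a <- img Av) \big[Rplus/R0]_(b <- img Bv)
    (let j := prob p (fun w => (Av w == a) && (Bv w == b)) in
     if Req_EM_T j 0 then R0
     else (j * log2 (j / (prob p (fun w => Av w == a)
                          * prob p (fun w => Bv w == b))))).

Definition l1dist (W : finType) (p q : W -> R) : R :=
  \big[Rplus/R0]_(w : W) Rabs (p w - q w).

(* Arikan's matrix G_N = B_N F^{(x)n} over F_2 (entries as bools,      *)
(* F_2 addition = xorb, multiplication = andb).  Indices 0..N-1.       *)

Definition Fentry (a b : nat) : bool :=
  match a, b with
  | 0, 0 => true | 0, 1 => false | 1, 0 => true | 1, 1 => true
  | _, _ => false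
  end.

(* F^{(x)(m+1)} = F (x) F^{(x)m}: entry ((a,i'),(b,j')) with index
   a * 2^m + i' is F_{ab} * (F^{(x)m})_{i'j'} *)
Fixpoint Fkron (n i j : nat) : bool :=
  match n with
  | 0 => true
  | m.+1 => Fentry (i %/ 2 ^ m)%N (j %/ 2 ^ m)%N && Fkron m (i %% 2 ^ m)%N (j %% 2 ^ m)%N
  end.

Fixpoint bitrev (n i : nat) : nat :=
  match n with
  | 0 => 0
  | m.+1 => ((i %% 2) * 2 ^ m + bitrev m (i %/ 2))%N
  end.

Definition Bmat (n i k : nat) : bool := k == bitrev n i.

Definition Gmat (n : nat) (i j : 'I_(2 ^ n)) : bool :=
  \big[xorb/false]_(k < 2 ^ n) (Bmat n i k && Fkron n k j).

Definition polar (n : nat) (v : {ffun 'I_(2 ^ n) -> bool}) : {ffun 'I_(2 ^ n) -> bool} :=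
  [ffun j => \big[xorb/false]_(i < 2 ^ n) (v i && Gmat i j)].

Definition Omega (n : nat) (X Z : finType) : finType :=
  ({ffun 'I_(2 ^ n) -> bool} * {ffun 'I_(2 ^ n) -> bool}
   * {ffun 'I_(2 ^ n) -> X} * {ffun 'I_(2 ^ n) -> Z})%type.

Definition Useq n (X Z : finType) (w : Omega n X Z) := w.1.1.1.
Definition Vseq n (X Z : finType) (w : Omega n X Z) := w.1.1.2.
Definition Xseq n (X Z : finType) (w : Omega n X Z) := w.1.2.
Definition Zseq n (X Z : finType) (w : Omega n X Z) := w.2.

Definition Tseq n (X Z : finType) (w : Omega n X Z) := polar (Vseq w).

(* T^{i-1} (1-based) = (T_j)_{j < i} (0-based) as a list *)
Definition Tpast n (X Z : finType) (i : 'I_(2 ^ n)) (w : Omega n X Z) : seq bool :=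
  [seq Tseq w j | j <- [seq j : 'I_(2 ^ n) <- enum 'I_(2 ^ n) | (j < i)%N]].

Definition Tsub n (X Z : finType) (S : {set 'I_(2 ^ n)}) (w : Omega n X Z) : seq bool :=
  [seq Tseq w j | j <- enum S].

Definition iid n (X Z : finType) (P0 : (bool * bool * X * Z)%type -> R)
    (w : Omega n X Z) : R :=
  \big[Rmult/R1]_(i < 2 ^ n)
     P0 (Useq w i, Vseq w i, Xseq w i, Zseq w i).

Definition deltaN (n : nat) (beta : R) : R :=
  Rpower 2 (- Rpower (INR (2 ^ n)) beta).

Definition Hset n (X Z : finType) (beta : R) (P0 : (bool * bool * X * Z)%type -> R)
    : {set 'I_(2 ^ n)} :=
  [set i : 'I_(2 ^ n) |
     Rle_dec (1 - deltaN n beta)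
             (Bhatt (iid (n:=n) P0) (fun w => Tseq w i)
                    (fun w => (Tpast i w, Useq w, Zseq w)))].

(** Under the i.i.d. law [P], the chain rule writes
    [H(T[I\A] | T[A],U^N,Z^N)] as [H(T[I] | U^N,Z^N) - H(T[A] | U^N,Z^N)]; the
    first term is a sum over [i ∈ I] of entropies of single bits [T_i] given
    less than [(T^{i-1},U^N,Z^N)], each at least
    [ln 2 - 2 (1 - Z(T_i | T^{i-1},U^N,Z^N)) ≥ ln 2 - 2δ_N], and the second is
    at most [|A| ln 2].  So [H(T[I\A] | T[A],U^N,Z^N)] is within [2|I|δ_N] of
    its maximum [|I\A| ln 2].  Conditional entropy of an unnormalised measure
    is superadditive, and subadditive up to [s ln(1/ε) + O(ε + s)] where [s] is
    the mass of one summand; splitting [P] and [Q] along [min(P,Q)] bounds the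
    change of the conditional entropy from [P] to [Q] by
    [O(N ‖P-Q‖ + ‖P-Q‖ ln(1/ε) + ε)].  Finally [I(T[I\A]; T[A],U^N,Z^N)] is
    the gap between [H(T[I\A]) ≤ |I\A| ln 2] and the conditional entropy. *)

From HB Require Import structures.
From Stdlib Require Import Reals Lra FunctionalExtensionality.
From mathcomp Require Import all_boot.
Local Open Scope R_scope.
Set Implicit Arguments. Unset Strict Implicit. Unset Printing Implicit Defensive.

Lemma RplusA : associative Rplus. Proof. by move=> *; ring. Qed.
Lemma RmultA : associative Rmult. Proof. by move=> *; ring. Qed.
Lemma Rplus0l : left_id R0 Rplus. Proof. by move=> *; ring. Qed.
Lemma Rmult1l : left_id R1 Rmult. Proof. by move=> *; ring. Qed.
HB.instance Definition _ := Monoid.isComLaw.Build R R0 Rplus RplusA Rplus_comm Rplus0l.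
HB.instance Definition _ := Monoid.isComLaw.Build R R1 Rmult RmultA Rmult_comm Rmult1l.
HB.instance Definition _ := Monoid.isMulLaw.Build R R0 Rmult Rmult_0_l Rmult_0_r.
HB.instance Definition _ :=
  Monoid.isAddLaw.Build R Rmult Rplus Rmult_plus_distr_r Rmult_plus_distr_l.

Lemma sumR_le (I : Type) (r : seq I) (P : pred I) (F G : I -> R) :
  (forall i, P i -> F i <= G i) ->
  \big[Rplus/R0]_(i <- r | P i) F i <= \big[Rplus/R0]_(i <- r | P i) G i.
Proof. by move=> H; apply: (big_ind2 Rle); [lra | move=> *; lra | exact: H]. Qed.

Lemma sumR_ge0 (I : Type) (r : seq I) (P : pred I) (F : I -> R) :
  (forall i, P i -> 0 <= F i) -> 0 <= \big[Rplus/R0]_(i <- r | P i) F i.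
Proof. by move=> H; apply: (big_ind (fun x => 0 <= x)); [lra | move=> *; lra | exact: H]. Qed.

Lemma sumR_B (I : Type) (r : seq I) (F G : I -> R) :
  \big[Rplus/R0]_(i <- r) (F i - G i) =
  \big[Rplus/R0]_(i <- r) F i - \big[Rplus/R0]_(i <- r) G i.
Proof. by elim: r => [|a r IH]; rewrite ?big_nil ?big_cons ?IH; ring. Qed.

Lemma sumR_if_eq (T : eqType) (s : seq T) a (c : R) : uniq s -> a \in s ->
  \big[Rplus/R0]_(x <- s) (if a == x then c else R0) = c.
Proof.
elim: s => //= y s IH /andP[ys us]; rewrite inE big_cons => /orP[/eqP ->| as_].
  rewrite eqxx big_seq big1 /=; first lra.
  by move=> x xs; case: eqP => // e; move: ys; rewrite e xs.
have ->: (a == y) = false by apply/eqP => e; move: as_; rewrite e (negbTE ys).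
by rewrite IH //; lra.
Qed.

Lemma Rinv_ge0 x : 0 <= x -> 0 <= / x.
Proof. by case=> [h|<-]; [apply/Rlt_le/Rinv_0_lt_compat | rewrite Rinv_0; lra]. Qed.

Lemma pow2_gt0 k : 0 < 2 ^ k.
Proof. by apply: pow_lt; lra. Qed.

Lemma INR_expn2 k : INR (2 ^ k)%N = 2 ^ k.
Proof. by elim: k => [|k IH] //=; rewrite expnS mult_INR IH /=; lra. Qed.

Lemma ln_le_sub1 x : 0 < x -> ln x <= x - 1.
Proof. by move=> x0; have := exp_ineq1_le (ln x); rewrite exp_ln //; lra. Qed.

Lemma ln_le_mono x y : 0 < x -> x <= y -> ln x <= ln y.
Proof. by move=> x0 [xy|->]; [apply/Rlt_le/ln_increasing | lra]. Qed.

Lemma ln_div x y : 0 < x -> 0 < y -> ln (x / y) = ln x - ln y.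
Proof. by move=> x0 y0; rewrite /Rdiv ln_mult ?ln_Rinv //; apply: Rinv_0_lt_compat. Qed.

Lemma ln_div_split a b c d : 0 < a -> 0 < b -> 0 < c -> 0 < d ->
  ln (b / a) = ln (d / c) + ln (c * b / (d * a)).
Proof.
move=> *; rewrite !ln_div //; try exact: Rmult_lt_0_compat.
by rewrite !ln_mult //; ring.
Qed.

Lemma ln2_bounds : / 2 < ln 2 < 1.
Proof.
split; first exact: ln_lt_2.
by rewrite -(ln_exp 1); apply: ln_increasing; have := exp_ineq1 1; lra.
Qed.

Section WeightedSums.
Variable W : finType.
Implicit Types (mu nu : W -> R) (F H : W -> R).

Lemma sumR_wle mu F H : (forall w, 0 <= mu w) ->
  (forall w, 0 < mu w -> F w <= H w) ->
  \big[Rplus/R0]_(w : W) (mu w * F w) <= \big[Rplus/R0]_(w : W) (mu w * H w).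
Proof.
move=> h0 h; apply: sumR_le => w _; case: (h0 w) => [p|<-]; last lra.
by apply: Rmult_le_compat_l; [lra | apply: h].
Qed.

Lemma sumR_wD mu F H :
  \big[Rplus/R0]_(w : W) (mu w * (F w + H w)) =
  \big[Rplus/R0]_(w : W) (mu w * F w) + \big[Rplus/R0]_(w : W) (mu w * H w).
Proof. by rewrite -big_split; apply: eq_bigr => w _ /=; ring. Qed.

Lemma sumR_wZ mu c F :
  \big[Rplus/R0]_(w : W) (mu w * (c * F w)) = c * \big[Rplus/R0]_(w : W) (mu w * F w).
Proof. by rewrite big_distrr; apply: eq_bigr => w _ /=; ring. Qed.

Lemma sumR_wB mu F H :
  \big[Rplus/R0]_(w : W) (mu w * (F w - H w)) =
  \big[Rplus/R0]_(w : W) (mu w * F w) - \big[Rplus/R0]_(w : W) (mu w * H w).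
Proof. by rewrite -sumR_B; apply: eq_bigr => w _; ring. Qed.

Lemma sumR_wC mu c :
  \big[Rplus/R0]_(w : W) (mu w * c) = c * \big[Rplus/R0]_(w : W) mu w.
Proof. by rewrite big_distrr; apply: eq_bigr => w _ /=; ring. Qed.

Lemma sumR_Dw mu nu F :
  \big[Rplus/R0]_(w : W) ((mu w + nu w) * F w) =
  \big[Rplus/R0]_(w : W) (mu w * F w) + \big[Rplus/R0]_(w : W) (nu w * F w).
Proof. by rewrite -big_split; apply: eq_bigr => w _ /=; ring. Qed.

End WeightedSums.

Section FiberMass.
Variables (W : finType) (mu : W -> R).

Definition pr (K : eqType) (k : W -> K) (x : K) : R := prob mu (fun v => k v == x).

Lemma img_mem (K : eqType) (k : W -> K) w : k w \in img k.
Proof. by rewrite /img mem_undup; apply: map_f; rewrite mem_enum. Qed.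

Lemma sum_by_fiber (K : eqType) (k : W -> K) (F : K -> R) :
  \big[Rplus/R0]_(w : W) (mu w * F (k w)) =
  \big[Rplus/R0]_(x <- img k) (pr k x * F x).
Proof.
transitivity (\big[Rplus/R0]_(x <- img k) \big[Rplus/R0]_(w : W)
     (if k w == x then mu w * F (k w) else R0)); last first.
  apply: eq_bigr => x _; rewrite /pr /prob big_distrl [RHS]big_mkcond /=.
  by apply: eq_bigr => w _; case: eqP => // ->.
rewrite exchange_big; apply: eq_bigr => w _.
by rewrite sumR_if_eq ?undup_uniq ?img_mem.
Qed.

Lemma sum_fiber_bool (K : eqType) (b : W -> bool) (k : W -> K) x (H : bool -> R) :
  \big[Rplus/R0]_(v : W) (if k v == x then mu v * H (b v) else R0) =
  prob mu (fun v => (b v == false) && (k v == x)) * H false +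
  prob mu (fun v => (b v == true) && (k v == x)) * H true.
Proof.
rewrite /prob !big_distrl [X in _ = X + _]big_mkcond [X in _ = _ + X]big_mkcond.
rewrite -big_split; apply: eq_bigr => v _ /=.
by case: (k v == x); case: (b v) => /=; ring.
Qed.

Lemma pr_split_bool (K : eqType) (b : W -> bool) (k : W -> K) x :
  pr k x = prob mu (fun v => (b v == false) && (k v == x)) +
           prob mu (fun v => (b v == true) && (k v == x)).
Proof.
rewrite -[X in _ = X + _]Rmult_1_r -[X in _ = _ + X]Rmult_1_r.
rewrite -(sum_fiber_bool b k x (fun _ => 1)) /pr /prob [LHS]big_mkcond.
by apply: eq_bigr => v _; case: ifP => _; ring.
Qed.

Hypothesis mu_ge0 : forall w, 0 <= mu w.

Lemma prob_ge0 (E : pred W) : 0 <= prob mu E.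
Proof. exact: sumR_ge0. Qed.

Lemma pr_ge0 (K : eqType) (k : W -> K) x : 0 <= pr k x.
Proof. exact: prob_ge0. Qed.

Lemma prob_mono (E F : pred W) : (forall w, E w -> F w) -> prob mu E <= prob mu F.
Proof.
move=> h; rewrite /prob [X in X <= _]big_mkcond [X in _ <= X]big_mkcond.
apply: sumR_le => w _; case: ifP => Ew; first by rewrite (h _ Ew); lra.
by case: ifP => _; [apply: mu_ge0 | lra].
Qed.

Lemma mu_le_prob (E : pred W) w : E w -> mu w <= prob mu E.
Proof.
move=> Ew; rewrite /prob (bigD1 w) //=.
have := @sumR_ge0 _ (index_enum W) (fun i => E i && (i != w)) mu (fun i _ => mu_ge0 i).
lra.
Qed.

Lemma mu_le_pr (K : eqType) (k : W -> K) w : mu w <= pr k (k w).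
Proof. exact: mu_le_prob. Qed.

Lemma pr_gt0 (K : eqType) (k : W -> K) w : 0 < mu w -> 0 < pr k (k w).
Proof. by have := mu_le_pr k w; lra. Qed.

(** The tower property: [h] may be replaced by its conditional mean given [k]. *)
Lemma sum_fiber_mean (K : eqType) (k : W -> K) (h : W -> R) :
  \big[Rplus/R0]_(w : W) (mu w * h w) =
  \big[Rplus/R0]_(w : W) (mu w * \big[Rplus/R0]_(v : W)
       (if k v == k w then mu v * h v else R0) / pr k (k w)).
Proof.
transitivity (\big[Rplus/R0]_(w : W) \big[Rplus/R0]_(v : W)
       (if k v == k w then mu w * (mu v * h v / pr k (k v)) else R0)); last first.
  apply: eq_bigr => w _; rewrite /Rdiv Rmult_assoc big_distrl big_distrr.
  by apply: eq_bigr => v _; case: eqP => [->|_]; rewrite /Rdiv /=; ring.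
rewrite exchange_big; apply: eq_bigr => v _.
transitivity (\big[Rplus/R0]_(w : W) (if k w == k v then mu w else R0) *
              (mu v * h v / pr k (k v))).
  have -> : \big[Rplus/R0]_(w : W) (if k w == k v then mu w else R0) = pr k (k v).
    by rewrite /pr /prob [RHS]big_mkcond.
  case: (Req_EM_T (pr k (k v)) 0) => [e|ne]; last by field.
  have -> : mu v = 0 by have := mu_le_pr k v; have := mu_ge0 v; lra.
  by rewrite e; ring.
rewrite big_distrl; apply: eq_bigr => w _; rewrite eq_sym.
by case: ifP => _ /=; ring.
Qed.

End FiberMass.

Section FiberRatios.
Variable W : finType.
Implicit Types mu nu : W -> R.

Lemma sum_pr_ratio_le mu nu (K : eqType) (k : W -> K) : (forall w, 0 <= nu w) ->
  \big[Rplus/R0]_(w : W) (mu w * (pr nu k (k w) / pr mu k (k w))) <=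
  \big[Rplus/R0]_(w : W) nu w.
Proof.
move=> hn; rewrite (sum_by_fiber mu k (fun x => pr nu k x / pr mu k x)).
rewrite (eq_bigr (fun w => nu w * 1)) => [|w _]; last by ring.
rewrite (sum_by_fiber nu k (fun _ => 1)); apply: sumR_le => x _.
have := pr_ge0 hn k x; rewrite /Rdiv.
case: (Req_EM_T (pr mu k x) 0) => [->|ne] h; first lra.
by rewrite Rmult_comm Rmult_assoc Rinv_l //; lra.
Qed.

Lemma sum_pr_ratio_mono mu nu (K : eqType) (k : W -> K) (G : K -> R) :
  (forall w, 0 <= mu w) -> (forall w, mu w <= nu w) -> (forall x, 0 <= G x) ->
  \big[Rplus/R0]_(w : W) (mu w * (G (k w) / pr mu k (k w))) <=
  \big[Rplus/R0]_(w : W) (nu w * (G (k w) / pr nu k (k w))).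
Proof.
move=> hm hmn hG.
have hn w : 0 <= nu w by have := hm w; have := hmn w; lra.
rewrite (sum_by_fiber mu k (fun x => G x / pr mu k x)).
rewrite (sum_by_fiber nu k (fun x => G x / pr nu k x)).
apply: sumR_le => x _; rewrite /Rdiv.
have le : pr mu k x <= pr nu k x by apply: sumR_le.
have := pr_ge0 hm k x; have := hG x.
case: (Req_EM_T (pr mu k x) 0) => [->|ne] h1 h2.
  rewrite Rmult_0_l; apply: Rmult_le_pos; first exact: pr_ge0.
  by apply: Rmult_le_pos => //; apply: Rinv_ge0; apply: pr_ge0.
have ne2 : pr nu k x <> 0 by lra.
by rewrite !(Rmult_comm (pr _ _ _)) !Rmult_assoc !Rinv_l //; lra.
Qed.

Lemma count_snd_le (G : eqType) kk (s : seq (seq bool * G)) (c : G) :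
  uniq s -> (forall x, x \in s -> size x.1 = kk) ->
  (count (fun x => c == x.2) s <= 2 ^ kk)%N.
Proof.
move=> us hs; rewrite -size_filter; set f := filter _ s.
have uf : uniq (map fst f).
  rewrite map_inj_in_uniq ?filter_uniq // => -[x1 x2] [y1 y2].
  by rewrite !mem_filter /= => /andP[/eqP <- _] /andP[/eqP <- _] ->.
have sub : {subset map fst f <= map val (enum {: kk.-tuple bool})}.
  move=> z /mapP[x]; rewrite mem_filter => /andP[_ /hs/eqP sx] ->.
  by apply/mapP; exists (Tuple sx); rewrite ?mem_enum.
have := uniq_leq_size uf sub.
by rewrite !size_map -enumT -cardT card_tuple card_bool.
Qed.

(** Each value of [g] is shared by at most [2 ^ kk] values of [(y, g)]. *)
Lemma sum_pr_refine_le mu (G : eqType) (y : W -> seq bool) (g : W -> G) kk :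
  (forall w, 0 <= mu w) -> (forall w, size (y w) = kk) ->
  \big[Rplus/R0]_(w : W) (mu w * (pr mu g (g w) /
       pr mu (fun v => (y v, g v)) (y w, g w))) <=
  2 ^ kk * \big[Rplus/R0]_(w : W) mu w.
Proof.
move=> hm hs; pose yg v := (y v, g v).
rewrite (sum_by_fiber mu yg (fun x => pr mu g x.2 / pr mu yg x)).
apply: (Rle_trans _ (\big[Rplus/R0]_(x <- img yg) pr mu g x.2)).
  apply: sumR_le => x _; rewrite /Rdiv.
  have := pr_ge0 hm g x.2; have := pr_ge0 hm yg x.
  case: (Req_EM_T (pr mu yg x) 0) => [->|ne] h1 h2; first lra.
  by rewrite Rmult_comm Rmult_assoc Rinv_l //; lra.
rewrite (eq_bigr (fun x => \big[Rplus/R0]_(v : W)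
           (mu v * (if g v == x.2 then R1 else R0)))); last first.
  move=> x _; rewrite /pr /prob big_mkcond /=.
  by apply: eq_bigr => v _; case: ifP => _; ring.
rewrite exchange_big big_distrr; apply: sumR_le => v _.
rewrite -big_distrr /= Rmult_comm; apply: Rmult_le_compat_r => //.
have -> : \big[Rplus/R0]_(x <- img yg) (if g v == x.2 then R1 else R0) =
          INR (count (fun x => g v == x.2) (img yg)).
  elim: (img yg) => [|a t IH]; first by rewrite big_nil.
  by rewrite big_cons IH /= plus_INR; case: (g v == a.2) => /=; lra.
rewrite -INR_expn2; apply/le_INR/leP/count_snd_le; first exact: undup_uniq.
by move=> x; rewrite mem_undup => /mapP[u _ ->]; exact: hs.
Qed.

End FiberRatios.

Section CondEntropy.
Variables (W : finType) (Y G : eqType) (y : W -> Y) (g : W -> G).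
Implicit Types mu m : W -> R.

Definition jmass mu w := pr mu (fun v => (y v, g v)) (y w, g w).
Definition gmass mu w := pr mu g (g w).

(** [H(y | g)] in nats, for a measure [mu] that need not have total mass 1. *)
Definition condH mu := \big[Rplus/R0]_(w : W) (mu w * ln (gmass mu w / jmass mu w)).

Section Positive.
Variable mu : W -> R.
Hypothesis mu_ge0 : forall w, 0 <= mu w.

Lemma jmass_gt0 w : 0 < mu w -> 0 < jmass mu w.
Proof. exact: pr_gt0. Qed.

Lemma jmass_le_gmass w : jmass mu w <= gmass mu w.
Proof. by apply: prob_mono => // v /eqP[_ ->]. Qed.

Lemma gmass_gt0 w : 0 < mu w -> 0 < gmass mu w.
Proof. exact: pr_gt0. Qed.

Lemma condH_ge0 : 0 <= condH mu.
Proof.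
apply: sumR_ge0 => w _; case: (mu_ge0 w) => [p|<-]; last lra.
apply: Rmult_le_pos; first lra.
have a0 := jmass_gt0 p; have ab := jmass_le_gmass w.
rewrite -ln_1; apply: ln_le_mono; first lra.
by apply: (Rmult_le_reg_r (jmass mu w)) => //; rewrite /Rdiv Rmult_assoc Rinv_l; lra.
Qed.

End Positive.

Lemma condH_le_cross m mu : (forall w, 0 <= m w) -> (forall w, m w <= mu w) ->
  condH m <= \big[Rplus/R0]_(w : W) (m w * ln (gmass mu w / jmass mu w)) +
    \big[Rplus/R0]_(w : W) (mu w * (jmass mu w * gmass m w / gmass mu w / jmass mu w))
    - \big[Rplus/R0]_(w : W) m w.
Proof.
move=> h0 hle.
have h0' w : 0 <= mu w by have := h0 w; have := hle w; lra.
pose c w := jmass mu w * gmass m w / gmass mu w.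
apply: (@Rle_trans _ (\big[Rplus/R0]_(w : W)
   (m w * (ln (gmass mu w / jmass mu w) + (c w / jmass m w - 1))))).
  apply: sumR_wle => // w p.
  have p' : 0 < mu w by have := hle w; lra.
  have am := jmass_gt0 h0 p; have bm := gmass_gt0 h0 p.
  have a := jmass_gt0 h0' p'; have b := gmass_gt0 h0' p'.
  have e : c w / jmass m w = jmass mu w * gmass m w / (gmass mu w * jmass m w).
    by rewrite /c; field; lra.
  have r0 : 0 < c w / jmass m w.
    by rewrite e; apply: Rdiv_lt_0_compat; apply: Rmult_lt_0_compat.
  have := ln_le_sub1 r0; rewrite (ln_div_split am bm a b) e; lra.
rewrite sumR_wD sumR_wB sumR_wC Rmult_1_l.
have hc x : 0 <= pr mu (fun v => (y v, g v)) x * pr m g x.2 / pr mu g x.2.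
  by apply: Rmult_le_pos; [apply: Rmult_le_pos | apply: Rinv_ge0]; apply: pr_ge0.
have := sum_pr_ratio_mono (fun v => (y v, g v)) h0 hle hc.
rewrite /c /jmass /gmass /=; lra.
Qed.

Lemma condH_superadd m1 m2 : (forall w, 0 <= m1 w) -> (forall w, 0 <= m2 w) ->
  condH m1 + condH m2 <= condH (fun w => m1 w + m2 w).
Proof.
move=> h1 h2; set mu := fun w => m1 w + m2 w.
have hm w : 0 <= mu w by rewrite /mu; have := h1 w; have := h2 w; lra.
have := @condH_le_cross m1 mu h1 (fun w => ltac:(rewrite /mu; have := h2 w; lra)).
have := @condH_le_cross m2 mu h2 (fun w => ltac:(rewrite /mu; have := h1 w; lra)).
have -> : condH mu = \big[Rplus/R0]_(w : W) (m1 w * ln (gmass mu w / jmass mu w)) +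
    \big[Rplus/R0]_(w : W) (m2 w * ln (gmass mu w / jmass mu w)) by rewrite -sumR_Dw.
have eS : \big[Rplus/R0]_(w : W) mu w =
          \big[Rplus/R0]_(w : W) m1 w + \big[Rplus/R0]_(w : W) m2 w by exact: big_split.
have hG : \big[Rplus/R0]_(w : W) (mu w * (jmass mu w * gmass m2 w / gmass mu w / jmass mu w)) +
          \big[Rplus/R0]_(w : W) (mu w * (jmass mu w * gmass m1 w / gmass mu w / jmass mu w))
          <= \big[Rplus/R0]_(w : W) mu w.
  rewrite -sumR_wD [X in _ <= X](eq_bigr (fun w => mu w * 1)) => [|w _]; last by ring.
  apply: sumR_wle => // w p.
  have a := jmass_gt0 hm p; have b := gmass_gt0 hm p.
  have eb : gmass mu w = gmass m1 w + gmass m2 w by exact: big_split.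
  by rewrite eb in b *; apply: Req_le; field; lra.
lra.
Qed.

Lemma condH_le_cross_err m mu c : (forall w, 0 <= m w) -> (forall w, m w <= mu w) -> 0 < c ->
  \big[Rplus/R0]_(w : W) (m w * ln (gmass mu w / jmass mu w)) <=
  condH m + c * \big[Rplus/R0]_(w : W) mu w - \big[Rplus/R0]_(w : W) m w
   + ln (/ c) * \big[Rplus/R0]_(w : W) m w.
Proof.
move=> h0 hle c0.
have hmu w : 0 <= mu w by have := h0 w; have := hle w; lra.
apply: (@Rle_trans _ (\big[Rplus/R0]_(w : W) (m w * (ln (gmass m w / jmass m w) +
   (c * (gmass mu w / gmass m w) + (ln (/ c) - 1)))))).
  apply: sumR_wle => // w p.
  have p' : 0 < mu w by have := hle w; lra.
  have am := jmass_gt0 h0 p; have bm := gmass_gt0 h0 p.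
  have a := jmass_gt0 hmu p'; have b := gmass_gt0 hmu p'.
  have ajm : jmass m w <= jmass mu w by apply: sumR_le.
  have r0 : 0 < c * (gmass mu w / gmass m w).
    by apply: Rmult_lt_0_compat => //; apply: Rdiv_lt_0_compat.
  have : ln (jmass m w / jmass mu w) <= 0.
    rewrite -ln_1; apply: ln_le_mono; first exact: Rdiv_lt_0_compat.
    by apply: (Rmult_le_reg_r (jmass mu w)) => //; rewrite /Rdiv Rmult_assoc Rinv_l; lra.
  have := ln_le_sub1 r0.
  rewrite !ln_div ?ln_mult ?ln_Rinv ?ln_div //; try exact: Rdiv_lt_0_compat;
    [lra | exact: Rinv_0_lt_compat].
rewrite !sumR_wD sumR_wZ !sumR_wC.
have := sum_pr_ratio_le m g hmu; rewrite -/(gmass mu) -/(gmass m) /condH => h.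
by have := Rmult_le_compat_l c _ _ (Rlt_le _ _ c0) h; rewrite /gmass; lra.
Qed.

Lemma condH_subadd M S eps : (forall w, 0 <= M w) -> (forall w, 0 <= S w) -> 0 < eps ->
  condH (fun w => M w + S w) <= condH M + condH S +
    (\big[Rplus/R0]_(w : W) (M w + S w) - \big[Rplus/R0]_(w : W) M w) +
    (eps * \big[Rplus/R0]_(w : W) (M w + S w) - \big[Rplus/R0]_(w : W) S w
     + \big[Rplus/R0]_(w : W) S w * ln (/ eps)).
Proof.
move=> hM hS e0; set P := fun w => M w + S w.
have h1 w : M w <= P w by rewrite /P; have := hS w; lra.
have h2 w : S w <= P w by rewrite /P; have := hM w; lra.
have := condH_le_cross_err hM h1 Rlt_0_1; have := condH_le_cross_err hS h2 e0.
have -> : condH P = \big[Rplus/R0]_(w : W) (M w * ln (gmass P w / jmass P w)) +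
    \big[Rplus/R0]_(w : W) (S w * ln (gmass P w / jmass P w)) by rewrite /condH -sumR_Dw.
by rewrite Rinv_1 ln_1 /P; lra.
Qed.

End CondEntropy.

Lemma MI_as_sum (W : finType) (mu : W -> R) (A B : eqType) (a : W -> A) (b : W -> B) :
  MI mu a b = \big[Rplus/R0]_(w : W) (mu w *
    log2 (prob mu (fun v => (a v == a w) && (b v == b w)) /
          (pr mu a (a w) * pr mu b (b w)))).
Proof.
pose L x z := log2 (prob mu (fun v => (a v == x) && (b v == z)) / (pr mu a x * pr mu b z)).
transitivity (\big[Rplus/R0]_(x <- img a) \big[Rplus/R0]_(z <- img b)
   \big[Rplus/R0]_(w : W) (if (a w == x) && (b w == z) then mu w * L (a w) (b w) else R0)).
  apply: eq_bigr => x _; apply: eq_bigr => z _ /=.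
  transitivity (prob mu (fun w => (a w == x) && (b w == z)) * L x z).
    by case: Req_EM_T => [e|_] /=; [rewrite e; ring | ].
  rewrite /prob big_distrl [LHS]big_mkcond; apply: eq_bigr => w _.
  by case: ifP => // /andP[/eqP -> /eqP ->].
rewrite (eq_bigr (fun x => \big[Rplus/R0]_(w : W) \big[Rplus/R0]_(z <- img b)
    (if (a w == x) && (b w == z) then mu w * L (a w) (b w) else R0))); last first.
  by move=> x _; rewrite exchange_big.
rewrite exchange_big; apply: eq_bigr => w _.
transitivity (\big[Rplus/R0]_(x <- img a)
                (if a w == x then mu w * L (a w) (b w) else R0)); last first.
  by rewrite sumR_if_eq ?undup_uniq ?img_mem.
apply: eq_bigr => x _; case: eqP => _ /=; first by rewrite sumR_if_eq ?undup_uniq ?img_mem.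
by rewrite big1.
Qed.

(** [MI] is measured in bits, [condH] in nats. *)
Lemma MI_ln2_eq (W : finType) (Q : W -> R) (Y G : eqType) (y : W -> Y) (g : W -> G) :
  (forall w, 0 <= Q w) -> \big[Rplus/R0]_(w : W) Q w = 1 ->
  MI Q y g * ln 2 = condH y (fun _ => tt) Q - condH y g Q.
Proof.
move=> hQ0 hQ1; rewrite MI_as_sum big_distrl /condH -sumR_B.
apply: eq_bigr => w _ /=.
case: (hQ0 w) => [p|<-]; last by ring.
have eB1 : gmass (fun _ : W => tt) Q w = 1 by rewrite -hQ1 /gmass /pr /prob; apply: eq_bigl.
have eA1 : jmass y (fun _ : W => tt) Q w = pr Q y (y w).
  by rewrite /jmass /pr /prob; apply: eq_bigl => v; rewrite xpair_eqE andbT.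
have a0 := jmass_gt0 y g hQ0 p; have a1 := pr_gt0 hQ0 y p; have a2 := pr_gt0 hQ0 g p.
have Lne : ln 2 <> 0 by have := ln2_bounds; lra.
have ej : jmass y g Q w = prob Q (fun v => (y v == y w) && (g v == g w)) by [].
rewrite eB1 eA1 ej /log2 /gmass in a0 a2 *.
rewrite !ln_div ?ln_mult ?ln_1 //; [field; lra | lra | exact: Rmult_lt_0_compat].
Qed.

Section BooleanBlocks.
Variables (W : finType) (G : eqType) (y : W -> seq bool) (g : W -> G) (kk : nat).
Hypothesis size_y : forall w, size (y w) = kk.

Lemma condH_le_card mu : (forall w, 0 <= mu w) ->
  condH y g mu <= INR kk * ln 2 * \big[Rplus/R0]_(w : W) mu w.
Proof.
move=> h0; have c0 := pow2_gt0 kk.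
apply: (@Rle_trans _ (\big[Rplus/R0]_(w : W) (mu w *
   (/ 2 ^ kk * (gmass g mu w / jmass y g mu w) + (INR kk * ln 2 - 1))))).
  apply: sumR_wle => // w p.
  have a0 := jmass_gt0 y g h0 p; have b0 := gmass_gt0 g h0 p.
  have r0 : 0 < / 2 ^ kk * (gmass g mu w / jmass y g mu w).
    by apply: Rmult_lt_0_compat; [apply: Rinv_0_lt_compat | apply: Rdiv_lt_0_compat].
  have := ln_le_sub1 r0; rewrite ln_mult ?ln_Rinv ?ln_pow //; try lra;
    [exact: Rinv_0_lt_compat | exact: Rdiv_lt_0_compat].
rewrite sumR_wD sumR_wZ sumR_wC.
have := @sum_pr_refine_le _ mu _ y g kk h0 size_y; rewrite -/(gmass g mu) => h.
have : / 2 ^ kk * \big[Rplus/R0]_(w : W) (mu w * (gmass g mu w / jmass y g mu w)) <=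
       \big[Rplus/R0]_(w : W) mu w.
  apply: (Rmult_le_reg_l (2 ^ kk)) => //; rewrite -Rmult_assoc Rinv_r; last lra.
  by rewrite Rmult_1_l; exact: h.
lra.
Qed.

(** Split [P] and [Q] along [M := min(P, Q)]: superadditivity gives
    [H_M ≤ H_Q], and almost-subadditivity bounds [H_P] by [H_M] plus the
    entropy of the excess [P - M]. *)
Lemma condH_le_perturb P Q eps :
  (forall w, 0 <= P w) -> (forall w, 0 <= Q w) -> 0 < eps ->
  condH y g P <= condH y g Q +
    \big[Rplus/R0]_(w : W) (P w - Rmin (P w) (Q w)) * (INR kk * ln 2 + ln (/ eps)) +
    eps * \big[Rplus/R0]_(w : W) P w.
Proof.
move=> hP hQ e0.
set M := fun w => Rmin (P w) (Q w).
set S := fun w => Q w - M w; set S' := fun w => P w - M w.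
have hM w : 0 <= M w by apply: Rmin_glb.
have hS w : 0 <= S w by have := Rmin_r (P w) (Q w); rewrite /S /M; lra.
have hS' w : 0 <= S' w by have := Rmin_l (P w) (Q w); rewrite /S' /M; lra.
have HQ : condH y g M <= condH y g Q.
  have -> : Q = fun w => M w + S w by apply: functional_extensionality => w; rewrite /S; ring.
  by have := condH_superadd y g hM hS; have := condH_ge0 y g hS; lra.
have HP := condH_subadd y g hM hS' e0; rewrite big_split /= in HP.
have eP : (fun w => M w + S' w) = P.
  by apply: functional_extensionality => w; rewrite /S'; ring.
have ePM : \big[Rplus/R0]_(w : W) P w =
           \big[Rplus/R0]_(w : W) M w + \big[Rplus/R0]_(w : W) S' w.
  by rewrite -big_split; apply: eq_bigr => w _; rewrite /S' /=; ring.
have HS' := condH_le_card hS'.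
have eS' : \big[Rplus/R0]_(w : W) (P w - Rmin (P w) (Q w)) = \big[Rplus/R0]_(w : W) S' w by [].
by rewrite eP in HP; rewrite ePM eS'; lra.
Qed.

End BooleanBlocks.

Lemma MI_le_perturb (W : finType) (G : eqType) (y : W -> seq bool) (g : W -> G) kk
    (P Q : W -> R) eps Bd :
  (forall w, size (y w) = kk) ->
  (forall w, 0 <= P w) -> (forall w, 0 <= Q w) -> \big[Rplus/R0]_(w : W) Q w = 1 ->
  0 < eps -> INR kk * ln 2 * \big[Rplus/R0]_(w : W) P w - condH y g P <= Bd ->
  MI Q y g * ln 2 <= INR kk * ln 2 * (1 - \big[Rplus/R0]_(w : W) P w) + Bd +
    \big[Rplus/R0]_(w : W) (P w - Rmin (P w) (Q w)) * (INR kk * ln 2 + ln (/ eps)) +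
    eps * \big[Rplus/R0]_(w : W) P w.
Proof.
move=> hy hP hQ hQ1 e0 hBd.
rewrite (MI_ln2_eq y g hQ hQ1).
have := @condH_le_card W _ y (fun _ => tt) kk hy Q hQ; rewrite hQ1.
have := @condH_le_perturb W G y g kk hy P Q eps hP hQ e0.
lra.
Qed.

Lemma mass_sq_le_bhatt p0 p1 : 0 <= p0 -> 0 <= p1 -> 0 < p0 + p1 ->
  (p0 * (2 * p0 / (p0 + p1)) + p1 * (2 * p1 / (p0 + p1))) / (p0 + p1) <=
  3 - 4 * sqrt (p0 / (p0 + p1) * (p1 / (p0 + p1))).
Proof.
move=> h0 h1 hs.
set x := p0 / (p0 + p1); set z := p1 / (p0 + p1).
have hx : 0 <= x by apply: Rmult_le_pos => //; apply: Rinv_ge0; lra.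
have hz : 0 <= z by apply: Rmult_le_pos => //; apply: Rinv_ge0; lra.
have sum1 : x + z = 1 by rewrite /x /z; field; lra.
have -> : (p0 * (2 * p0 / (p0 + p1)) + p1 * (2 * p1 / (p0 + p1))) / (p0 + p1) =
   2 * (x * x) + 2 * (z * z) by rewrite /x /z; field; lra.
have hxz : 0 <= x * z by apply: Rmult_le_pos.
have s2 := sqrt_sqrt _ hxz; have s0 := sqrt_pos (x * z).
clearbody x z.
by have := pow2_ge_0 (2 * sqrt (x * z) - 1); nra.
Qed.

(** With [c] a function of [f], [ln 2 - H(b | c) ≤ 2 (1 - Z(b | f))]. *)
Section BhattBound.
Variables (W : finType) (F C : eqType) (mu : W -> R) (b : W -> bool) (f : W -> F) (c : W -> C).
Hypothesis mu_ge0 : forall w, 0 <= mu w.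
Hypothesis c_of_f : forall v w, f v = f w -> c v = c w.

Let bf v := (b v, f v).
Let bc v := (b v, c v).

Lemma Bhatt_as_sum :
  Bhatt mu b f = 2 * \big[Rplus/R0]_(w : W) (mu w *
     sqrt (prob mu (fun v => (b v == false) && (f v == f w)) / pr mu f (f w) *
           (prob mu (fun v => (b v == true) && (f v == f w)) / pr mu f (f w)))).
Proof.
by rewrite (sum_by_fiber mu f (fun x =>
  sqrt (prob mu (fun v => (b v == false) && (f v == x)) / pr mu f x *
        (prob mu (fun v => (b v == true) && (f v == x)) / pr mu f x)))).
Qed.

Lemma sum_jmass_le_bhatt :
  \big[Rplus/R0]_(w : W) (mu w * (2 * pr mu bf (bf w) / pr mu f (f w))) <=
  3 * \big[Rplus/R0]_(w : W) mu w - 2 * Bhatt mu b f.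
Proof.
rewrite (sum_fiber_mean mu_ge0 f).
under eq_bigr => w _ do rewrite /Rdiv Rmult_assoc.
pose p0 x := prob mu (fun v => (b v == false) && (f v == x)).
pose p1 x := prob mu (fun v => (b v == true) && (f v == x)).
apply: (@Rle_trans _ (\big[Rplus/R0]_(w : W) (mu w * ((p0 (f w) * (2 * p0 (f w) / pr mu f (f w))
   + p1 (f w) * (2 * p1 (f w) / pr mu f (f w))) / pr mu f (f w))))).
  apply: Req_le; apply: eq_bigr => w _; congr (_ * (_ * _)).
  rewrite -(sum_fiber_bool mu b f (f w) (fun be =>
     2 * prob mu (fun v => (b v == be) && (f v == f w)) / pr mu f (f w))).
  by apply: eq_bigr => v _; case: eqP => // e; rewrite /bf /Rdiv e.
rewrite Bhatt_as_sum.
apply: (@Rle_trans _ (\big[Rplus/R0]_(w : W) (mu w * (3 + (-4) *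
   sqrt (p0 (f w) / pr mu f (f w) * (p1 (f w) / pr mu f (f w))))))).
  apply: sumR_wle => // w p.
  rewrite (pr_split_bool mu b f (f w)) -/(p0 (f w)) -/(p1 (f w)).
  have q0 : 0 <= p0 (f w) by exact: prob_ge0.
  have q1 : 0 <= p1 (f w) by exact: prob_ge0.
  have q2 : 0 < p0 (f w) + p1 (f w) by rewrite -pr_split_bool; exact: pr_gt0.
  by have := mass_sq_le_bhatt q0 q1 q2; lra.
by rewrite sumR_wD sumR_wC sumR_wZ /p0 /p1; apply: Req_le; ring.
Qed.

Lemma sum_coarse_ratio_le :
  \big[Rplus/R0]_(w : W) (mu w * (pr mu bc (bc w) * pr mu f (f w) /
        (pr mu c (c w) * pr mu bf (bf w)))) <= \big[Rplus/R0]_(w : W) mu w.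
Proof.
rewrite (sum_fiber_mean mu_ge0 f).
under eq_bigr => w _ do rewrite /Rdiv Rmult_assoc.
rewrite [X in _ <= X](eq_bigr (fun w => mu w * 1)) => [|w _]; last by ring.
apply: sumR_wle => // w p.
have pf0 := pr_gt0 mu_ge0 f p; have pc0 := pr_gt0 mu_ge0 c p.
pose h be := pr mu bc (be, c w) * pr mu f (f w) / (pr mu c (c w) * pr mu bf (be, f w)).
rewrite (eq_bigr (fun v => if f v == f w then mu v * h (b v) else R0)); last first.
  by move=> v _; case: eqP => // e; rewrite /h /bc /bf e (c_of_f e).
rewrite (sum_fiber_bool mu b f (f w) h).
have key be : prob mu (fun v => (b v == be) && (f v == f w)) * h be <=
              pr mu bc (be, c w) * pr mu f (f w) / pr mu c (c w).
  rewrite /h (_ : prob mu _ = pr mu bf (be, f w)) //.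
  have q0 := pr_ge0 mu_ge0 bf (be, f w); have q1 := pr_ge0 mu_ge0 bc (be, c w).
  case: (Req_EM_T (pr mu bf (be, f w)) 0) => [->|ne].
    rewrite Rmult_0_l; apply: Rmult_le_pos; first by apply: Rmult_le_pos; lra.
    by apply: Rinv_ge0; lra.
  by apply: Req_le; field; lra.
have := key false; have := key true.
have -> : pr mu c (c w) = pr mu bc (false, c w) + pr mu bc (true, c w).
  exact: pr_split_bool.
move=> k1 k0; rewrite /Rdiv.
apply: (@Rle_trans _ ((pr mu bc (false, c w) + pr mu bc (true, c w)) * pr mu f (f w)
          / (pr mu bc (false, c w) + pr mu bc (true, c w)) * / pr mu f (f w))).
  apply: Rmult_le_compat_r; first by apply: Rinv_ge0; lra.
  by rewrite /Rdiv !Rmult_plus_distr_r; exact: Rplus_le_compat.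
have pc1 : 0 < pr mu bc (false, c w) + pr mu bc (true, c w).
  by move: pc0; rewrite (pr_split_bool mu b c (c w)).
by apply: Req_le; field; lra.
Qed.

Lemma ln2_sub_condH_le_bhatt :
  \big[Rplus/R0]_(w : W) (mu w * ln (2 * pr mu bc (bc w) / pr mu c (c w))) <=
  2 * (\big[Rplus/R0]_(w : W) mu w - Bhatt mu b f).
Proof.
pose r1 w := pr mu bc (bc w) * pr mu f (f w) / (pr mu c (c w) * pr mu bf (bf w)).
pose r2 w := 2 * pr mu bf (bf w) / pr mu f (f w).
apply: (@Rle_trans _ (\big[Rplus/R0]_(w : W) (mu w * (r1 w + r2 w + (-2))))).
  apply: sumR_wle => // w p.
  have a1 := pr_gt0 mu_ge0 bc p; have a2 := pr_gt0 mu_ge0 bf p.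
  have a3 := pr_gt0 mu_ge0 f p; have a4 := pr_gt0 mu_ge0 c p.
  have e : 2 * pr mu bc (bc w) / pr mu c (c w) = r1 w * r2 w by rewrite /r1 /r2; field; lra.
  have r10 : 0 < r1 w by apply: Rdiv_lt_0_compat; apply: Rmult_lt_0_compat.
  have r20 : 0 < r2 w by apply: Rdiv_lt_0_compat => //; lra.
  by have := ln_le_sub1 r10; have := ln_le_sub1 r20; rewrite e ln_mult //; lra.
rewrite !sumR_wD sumR_wC.
by have := sum_coarse_ratio_le; have := sum_jmass_le_bhatt; rewrite /r1 /r2; lra.
Qed.

End BhattBound.

Section PolarBlocks.
Variables (n : nat) (X Z : finType).
Local Notation W := (Omega n X Z).
Local Notation N := (2 ^ n)%N.
Implicit Types (S I A : {set 'I_N}) (v w : W).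

Definition side S w := (Tsub S w, Useq w, Zseq w).

Definition condHT mu S1 S2 := condH (Tsub S1) (side S2) mu.

Definition prefix I (t : nat) : {set 'I_N} := [set j in I | (j < t)%N].

Lemma size_Tsub S w : size (Tsub S w) = #|S|.
Proof. by rewrite /Tsub size_map cardE. Qed.

Lemma eq_Tsub S v w : (Tsub S v == Tsub S w) = [forall j in S, Tseq v j == Tseq w j].
Proof.
apply/eqP/forall_inP => [/eq_in_map h j jS | h]; first by apply/eqP/h; rewrite mem_enum.
by apply/eq_in_map => j; rewrite mem_enum => /h/eqP.
Qed.

Lemma eq_Tpast (i : 'I_N) v w :
  (Tpast i v == Tpast i w) = [forall j : 'I_N, (j < i)%N ==> (Tseq v j == Tseq w j)].
Proof.
apply/eqP/forallP => [/eq_in_map h j | h].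
  by apply/implyP => ji; apply/eqP/h; rewrite mem_filter ji mem_enum.
by apply/eq_in_map => j; rewrite mem_filter => /andP[ji _]; apply/eqP; exact: (implyP (h j)).
Qed.

Lemma eq_side S v w : (side S v == side S w) =
  [&& [forall j in S, Tseq v j == Tseq w j], Useq v == Useq w & Zseq v == Zseq w].
Proof. by rewrite /side !xpair_eqE eq_Tsub andbA. Qed.

Lemma eq_Tsub_side S1 S2 v w :
  (Tsub S1 v == Tsub S1 w) && (side S2 v == side S2 w) = (side (S1 :|: S2) v == side (S1 :|: S2) w).
Proof.
rewrite eq_Tsub !eq_side !andbA; congr (_ && _ && _).
apply/andP/forall_inP => [[/forall_inP h1 /forall_inP h2] j | h].
  by rewrite inE => /orP[/h1 | /h2].
by split; apply/forall_inP => j jS; apply: h; rewrite inE jS ?orbT.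
Qed.

Lemma jmass_Tsub_side mu S1 S2 w :
  jmass (Tsub S1) (side S2) mu w = pr mu (side (S1 :|: S2)) (side (S1 :|: S2) w).
Proof. by apply: eq_bigl => v; rewrite -eq_Tsub_side. Qed.

Lemma condH_Tsub_side mu S1 S2 : (forall w, 0 <= mu w) ->
  condHT mu S1 S2 = condHT mu (S1 :|: S2) set0 - condHT mu S2 set0.
Proof.
move=> h0; rewrite /condHT /condH -sumR_wB; apply: eq_bigr => w _.
case: (h0 w) => [p|<-]; last by ring.
rewrite /gmass !jmass_Tsub_side !setU0.
have a0 := pr_gt0 h0 (side (S1 :|: S2)) p; have a1 := pr_gt0 h0 (side S2) p.
have a2 := pr_gt0 h0 (side set0) p.
by rewrite !ln_div //; ring.
Qed.

Lemma condHT_ge0 mu S1 S2 : (forall w, 0 <= mu w) -> 0 <= condHT mu S1 S2.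
Proof. exact: condH_ge0. Qed.

Lemma prefix0 I : prefix I 0 = set0.
Proof. by apply/setP => j; rewrite !inE andbF. Qed.

Lemma prefixN I : prefix I N = I.
Proof. by apply/setP => j; rewrite !inE ltn_ord andbT. Qed.

Lemma prefixS I (i : 'I_N) : i \in I -> prefix I i.+1 = [set i] :|: prefix I i.
Proof.
move=> iI; apply/setP => j; rewrite !inE ltnS leq_eqVlt.
case: (j =P i) => [->|ne]; first by rewrite eqxx iI.
by have -> : (nat_of_ord j == nat_of_ord i) = false by apply/eqP => /val_inj.
Qed.

Lemma prefixS_notin I t :
  (forall i : 'I_N, nat_of_ord i = t -> i \notin I) -> prefix I t.+1 = prefix I t.
Proof.
move=> h; apply/setP => j; rewrite !inE ltnS leq_eqVlt.
by case: eqP => [e|_] //=; have := h j e; case: (j \in I).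
Qed.

End PolarBlocks.

Section PolarChain.
Variables (n : nat) (X Z : finType).
Local Notation W := (Omega n X Z).
Local Notation N := (2 ^ n)%N.
Variable P : W -> R.
Hypothesis P_ge0 : forall w, 0 <= P w.

Lemma ln2_sub_condH_bit_le (S : {set 'I_N}) (i : 'I_N) :
  (forall j, j \in S -> (j < i)%N) ->
  ln 2 * \big[Rplus/R0]_(w : W) P w - condHT P [set i] S <=
  2 * (\big[Rplus/R0]_(w : W) P w -
       Bhatt P (fun w => Tseq w i) (fun w => (Tpast i w, Useq w, Zseq w))).
Proof.
move=> Si; pose b : W -> bool := fun w => Tseq w i.
have coarse (v w : W) : (Tpast i v, Useq v, Zseq v) = (Tpast i w, Useq w, Zseq w) ->
                  side S v = side S w.
  case=> /eqP e1 e2 e3; apply/eqP; rewrite eq_side e2 e3 !eqxx !andbT.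
  move: e1; rewrite eq_Tpast => /forallP h.
  by apply/forall_inP => j /Si ji; exact: (implyP (h j)).
apply: Rle_trans (@ln2_sub_condH_le_bhatt W _ _ P b _ (side S) P_ge0 coarse); apply: Req_le.
rewrite /condHT /condH -sumR_wC -sumR_wB; apply: eq_bigr => w _.
case: (P_ge0 w) => [p|<-]; last by ring.
have ej : jmass (Tsub [set i]) (side S) P w = pr P (fun v => (b v, side S v)) (b w, side S w).
  apply: eq_bigl => v; rewrite !xpair_eqE eq_Tsub; congr (_ && _).
  apply/forall_inP/eqP => [h | e j /set1P ->]; last exact/eqP.
  by apply/eqP/h; rewrite inE.
have a0 := pr_gt0 P_ge0 (fun v => (b v, side S v)) p; have a1 := pr_gt0 P_ge0 (side S) p.
have a2 := jmass_gt0 (Tsub [set i]) (side S) P_ge0 p.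
by rewrite -ej /gmass !ln_div ?ln_mult //; lra.
Qed.

Section Prefixes.
Variables (I : {set 'I_N}) (Bd : R).
Hypothesis bhatt_I : forall i, i \in I ->
  2 * (\big[Rplus/R0]_(w : W) P w -
       Bhatt P (fun w => Tseq w i) (fun w => (Tpast i w, Useq w, Zseq w))) <= Bd.

Lemma condH_prefix_gap t :
  INR #|prefix I t| * ln 2 * \big[Rplus/R0]_(w : W) P w
    - condHT P (prefix I t) set0 <= INR #|prefix I t| * Bd.
Proof.
elim: t => [|t IH].
  by rewrite prefix0 cards0 /=; have := condHT_ge0 set0 set0 P_ge0; lra.
case: (ltnP t N) => [lt|ge]; last first.
  rewrite prefixS_notin // => i e.
  by have := ltn_ord i; rewrite e ltnNge ge.
pose i := Ordinal lt; have ti : t = nat_of_ord i by [].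
case iI : (i \in I); last first.
  rewrite prefixS_notin // => j e; have -> : j = i by apply: val_inj.
  by rewrite iI.
rewrite ti in IH *; rewrite prefixS //.
have hcard : #|[set i] :|: prefix I i| = #|prefix I i|.+1.
  by rewrite cardsU1 !inE ltnn andbF.
have hbit := @ln2_sub_condH_bit_le (prefix I i) i (fun j => ltac:(by rewrite inE => /andP[])).
have hch : condHT P [set i] (prefix I i) =
    condHT P ([set i] :|: prefix I i) set0 - condHT P (prefix I i) set0.
  exact: condH_Tsub_side.
have := bhatt_I iI.
rewrite hcard S_INR; lra.
Qed.

Lemma condH_polar_gap (A : {set 'I_N}) : A \subset I ->
  INR #|I :\: A| * ln 2 * \big[Rplus/R0]_(w : W) P w
    - condHT P (I :\: A) A <= INR #|I| * Bd.
Proof.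
move=> AI.
have hI := condH_prefix_gap N; rewrite prefixN in hI.
have hA : condHT P A set0 <= INR #|A| * ln 2 * \big[Rplus/R0]_(w : W) P w.
  exact: (@condH_le_card _ _ (Tsub A) (side set0) _ (@size_Tsub n X Z A) P P_ge0).
have hch : condHT P (I :\: A) A = condHT P ((I :\: A) :|: A) set0 - condHT P A set0.
  exact: condH_Tsub_side.
have hcard : #|I| = (#|I :\: A| + #|A|)%N.
  by rewrite cardsD (setIidPr AI) subnK // subset_leq_card.
have eI : (I :\: A) :|: A = I by rewrite setUC -{1}(setIidPr AI) setID.
rewrite eI in hch; rewrite hcard plus_INR in hI *; lra.
Qed.

End Prefixes.

End PolarChain.

Lemma l1dist_excess_le (W : finType) (P Q : W -> R) :
  \big[Rplus/R0]_(w : W) (P w - Rmin (P w) (Q w)) <= l1dist P Q.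
Proof.
apply: sumR_le => w _.
apply: (Rmin_case_strong (P w) (Q w) (fun r => P w - r <= Rabs (P w - Q w))) => _.
  by have := Rabs_pos (P w - Q w); lra.
exact: Rle_abs.
Qed.

Lemma l1dist_mass_le (W : finType) (P Q : W -> R) :
  Rabs (\big[Rplus/R0]_(w : W) P w - \big[Rplus/R0]_(w : W) Q w) <= l1dist P Q.
Proof.
rewrite -sumR_B; apply: (big_ind2 (fun x y => Rabs x <= y)).
- by rewrite Rabs_R0; lra.
- by move=> x1 x2 y1 y2 h1 h2; apply: Rle_trans (Rabs_triang _ _) _; lra.
- by move=> w _; lra.
Qed.

Lemma iid_ge0 n (X Z : finType) (P0 : (bool * bool * X * Z)%type -> R) :
  (forall x, 0 <= P0 x) -> forall w, 0 <= iid (n := n) P0 w.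
Proof.
move=> h w; apply: (big_ind (fun x => 0 <= x)) => [|x y|i _];
  [lra | exact: Rmult_le_pos | exact: h].
Qed.

Lemma INR_expn2_ge1 n : 1 <= INR (2 ^ n).
Proof. by rewrite INR_expn2; apply: pow_R1_Rle; lra. Qed.

Lemma INR_card_le N (S : {set 'I_N}) : 0 <= INR #|S| <= INR N.
Proof.
split; first exact: pos_INR.
by apply/le_INR/leP; have := max_card (mem S); rewrite card_ord.
Qed.

Lemma deltaN_facts n beta : 0 < beta < 1 / 2 ->
  0 < deltaN n beta <= 1 /\ ln (/ deltaN n beta) <= INR (2 ^ n) * ln 2.
Proof.
move=> hb; have N1 := INR_expn2_ge1 n.
have xp : 0 < Rpower (INR (2 ^ n)) beta by apply: exp_pos.
have dpos : 0 < deltaN n beta by apply: exp_pos.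
split; first split => //.
  by rewrite /deltaN -(Rpower_O 2); [apply: Rle_Rpower; lra | lra].
rewrite ln_Rinv // /deltaN ln_Rpower.
have : Rpower (INR (2 ^ n)) beta <= INR (2 ^ n).
  by rewrite -{2}(Rpower_1 (INR (2 ^ n))); [apply: Rle_Rpower; lra | lra].
by have := ln2_bounds; nra.
Qed.

Lemma polar_error_budget Nn d k cI sP t L lneps :
  1 <= Nn -> 0 < d <= 1 -> 0 <= k <= Nn -> 0 <= cI <= Nn -> / 2 < L < 1 ->
  0 <= t <= 2 * Nn * d -> Rabs (sP - 1) <= 2 * Nn * d -> lneps <= Nn * L ->
  k * L * (1 - sP) + cI * (2 * (sP - (1 - d))) + t * (k * L + lneps)
    + 2 * Nn * d * sP <= 18 * Nn ^ 3 * d.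
Proof.
move=> N1 [d0 d1] [k0 kN] [I0 IN] [L1 L2] [t0 te] hs hl.
set e := 2 * Nn * d in te hs *.
have s1 := Rle_abs (sP - 1); have s2 := Rle_abs (- (sP - 1)); rewrite Rabs_Ropp in s2.
have e0 : 0 < e by rewrite /e; nra.
have kL0 : 0 <= k * L by nra.
have kL : k * L <= Nn by nra.
have b1 : k * L * (1 - sP) <= Nn * e by nra.
have b2 : cI * (2 * (sP - (1 - d))) <= Nn * (2 * (e + d)).
  apply: (@Rle_trans _ (cI * (2 * (e + d)))); first by apply: Rmult_le_compat_l; lra.
  by apply: Rmult_le_compat_r; lra.
have b3 : t * (k * L + lneps) <= e * (2 * Nn).
  apply: (@Rle_trans _ (t * (Nn + Nn * L))); first by apply: Rmult_le_compat_l => //; lra.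
  have NL : 0 <= Nn * L <= Nn by split; nra.
  apply: (@Rle_trans _ (e * (Nn + Nn * L))); first by apply: Rmult_le_compat_r; lra.
  by apply: Rmult_le_compat_l; lra.
have b4 : e * sP <= e * (1 + e) by apply: Rmult_le_compat_l; lra.
have n2 : Nn <= Nn ^ 3 by simpl; nra.
have n3 : Nn * Nn <= Nn ^ 3 by simpl; nra.
rewrite /e in b1 b2 b3 b4 *; nra.
Qed.

Lemma le_of_mul_ln2 a V : a * ln 2 <= 18 * V -> 0 <= V -> a <= 36 * V.
Proof.
move=> h hV; have [L1 _] := ln2_bounds.
case: (Rle_lt_dec 0 a) => ha; last lra.
by have := Rmult_le_compat_l a _ _ ha (Rlt_le _ _ L1); lra.
Qed.

Lemma MI_polar_le n (X Z : finType) (P Q : Omega n X Z -> R) d (I A : {set 'I_(2 ^ n)}) :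
  (forall w, 0 <= P w) -> (forall w, 0 <= Q w) -> \big[Rplus/R0]_(w : Omega n X Z) Q w = 1 ->
  0 < d <= 1 -> ln (/ d) <= INR (2 ^ n) * ln 2 -> l1dist P Q <= 2 * INR (2 ^ n) * d ->
  (forall i, i \in I ->
     1 - d <= Bhatt P (fun w => Tseq w i) (fun w => (Tpast i w, Useq w, Zseq w))) ->
  A \subset I ->
  MI Q (Tsub (I :\: A)) (side A) <= 36 * (INR (2 ^ n) ^ 3 * d).
Proof.
move=> hP hQ hQ1 [d0 d1] dL hl1 HI AI.
set sP := \big[Rplus/R0]_(w : Omega n X Z) P w.
have N1 := INR_expn2_ge1 n; have L := ln2_bounds.
have e0 : 0 < 2 * INR (2 ^ n) * d by nra.
have hBd : INR #|I :\: A| * ln 2 * sP - condHT P (I :\: A) A <= INR #|I| * (2 * (sP - (1 - d))).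
  by apply: condH_polar_gap => // i /HI; rewrite /sP; lra.
have hMI := MI_le_perturb (@size_Tsub n X Z (I :\: A)) hP hQ hQ1 e0 hBd.
have hs : Rabs (sP - 1) <= 2 * INR (2 ^ n) * d.
  by rewrite -hQ1; exact: Rle_trans (l1dist_mass_le P Q) hl1.
have hln : ln (/ (2 * INR (2 ^ n) * d)) <= INR (2 ^ n) * ln 2.
  apply: Rle_trans dL; apply: ln_le_mono; first exact: Rinv_0_lt_compat.
  by apply: Rinv_le_contravar => //; nra.
have ht : 0 <= \big[Rplus/R0]_(w : Omega n X Z) (P w - Rmin (P w) (Q w)) <= 2 * INR (2 ^ n) * d.
  split; last exact: Rle_trans (l1dist_excess_le P Q) hl1.
  by apply: sumR_ge0 => w _; have := Rmin_l (P w) (Q w); lra.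
have := polar_error_budget N1 (conj d0 d1) (INR_card_le (I :\: A)) (INR_card_le I) L ht hs hln.
rewrite -/sP in hMI => hbud; apply: le_of_mul_ln2; first lra.
by apply: Rmult_le_pos; [apply: pow_le | ]; lra.
Qed.

Theorem lemma3 :
  forall m : nat, exists C : R,
  forall beta : R, (0 < beta < 1/2) ->
  exists N0 : nat,
  forall (X Z : finType), #|Z| = m ->
  forall P0 : (bool * bool * X * Z)%type -> R, is_dist P0 ->
  forall n : nat, (N0 <= 2 ^ n)%N ->
  forall Q : Omega n X Z -> R, is_dist Q ->
  (l1dist (iid (n:=n) P0) Q <= 2 * INR (2 ^ n) * deltaN n beta) ->
  forall I A : {set 'I_(2 ^ n)},
  I \subset Hset n beta P0 -> A \subset I ->
  (MI Q (fun w => Tsub (I :\: A) w) (fun w => (Tsub A w, Useq w, Zseq w))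
     <= C * INR (2 ^ n) ^ 3 * deltaN n beta).
Proof.
move=> m; exists 36 => beta hb; exists 0%N.
move=> X Z _ P0 [hP0 _] n _ Q [hQ0 hQ1] hl1 I A HI AI.
rewrite Rmult_assoc; apply: (MI_polar_le (iid_ge0 hP0) hQ0 hQ1 _ _ hl1 _ AI).
- exact: (deltaN_facts n hb).1.
- exact: (deltaN_facts n hb).2.
- move=> i /(subsetP HI); rewrite inE.
  by case: Rle_dec.
Qed.
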